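(* Let $1\to N\to\Gamma\to Q\to 1$ be an extension of finitely generated groups such that $N$ and $Q$ are infinite and $N$ is an acentral subgroup of $\Gamma$. Then $\Gamma$ is not presentable by a product.
   Context: A subgroup $A$ of a group $\Gamma$ is called acentral if for every $g\in A\setminus\{1\}$ the centraliser $C_\Gamma(g)$ is contained in $A$. An infinite group $\Gamma$ is not presentable by a product if for every homomorphism $\varphi\colon \Gamma_1\times\Gamma_2\to\Gamma$ whose image has finite index in $\Gamma$, at least one of $\varphi(\Gamma_1)$, $\varphi(\Gamma_2)$ is finite. *)

From Stdlib Require Import List.
Import ListNotations.
Set Implicit Arguments.

Record group := Group {
  carrier :> Type;
  gop : carrier -> carrier -> carrier;
  ginv : carrier -> carrier;
  gone : carrier;
  gop_assoc : forall x y z, gop x (gop y z) = gop (gop x y) z;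
  gop_1l : forall x, gop gone x = x;
  gop_Vl : forall x, gop (ginv x) x = gone
}.

Arguments gop {g}.
Arguments ginv {g}.
Arguments gone {g}.

Definition prod_group (G1 G2 : group) : group.
Proof.
  refine (@Group (G1 * G2)%type
    (fun x y => (gop (fst x) (fst y), gop (snd x) (snd y)))
    (fun x => (ginv (fst x), ginv (snd x)))
    (gone, gone) _ _ _).
  - intros [a b] [c d] [e f]; simpl; now rewrite !gop_assoc.
  - intros [a b]; simpl; now rewrite !gop_1l.
  - intros [a b]; simpl; now rewrite !gop_Vl.
Defined.

Definition is_hom (G H : group) (f : G -> H) : Prop :=
  forall x y : G, f (gop x y) = gop (f x) (f y).

Definition finite_set (T : Type) (S : T -> Prop) : Prop :=
  exists l : list T, forall x, S x -> In x l.

Definition infinite_group (G : group) : Prop :=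
  ~ finite_set (fun _ : G => True).

Inductive generated (G : group) (S : list G) : G -> Prop :=
| gen_base : forall x, In x S -> @generated G S x
| gen_one : @generated G S gone
| gen_op : forall x y, @generated G S x -> @generated G S y -> @generated G S (gop x y)
| gen_inv : forall x, @generated G S x -> @generated G S (ginv x).

Definition finitely_generated (G : group) : Prop :=
  exists S : list G, forall x, @generated G S x.

Definition image (A B : Type) (f : A -> B) : B -> Prop :=
  fun y => exists x, f x = y.

Definition finite_index (G : group) (H : G -> Prop) : Prop :=
  exists l : list G, forall x : G, exists g h, In g l /\ H h /\ x = gop g h.

Definition acentral (G : group) (A : G -> Prop) : Prop :=
  forall g : G, A g -> g <> gone ->
    forall h : G, gop h g = gop g h -> A h.

Definition not_presentable_by_product (G : group) : Prop :=
  infinite_group G /\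
  forall (G1 G2 : group) (phi : prod_group G1 G2 -> G),
    @is_hom (prod_group G1 G2) G phi ->
    @finite_index G (image phi) ->
    finite_set (image (fun x : G1 => phi (x, gone))) \/
    finite_set (image (fun y : G2 => phi (gone, y))).

(* Let [phi : G1 x G2 -> Gamma] have finite-index image, and suppose both factor images
   [A] and [B] are infinite, hence nontrivial.  They commute elementwise, so acentrality
   of [N] forces a dichotomy: either a nontrivial element of [A] or [B] lies in [N], and
   then the centraliser condition pulls first the other factor and then the first one
   into [N]; or [A] and [B] both meet [N] trivially, and then so does the whole image
   [A B].  In the first case the image lies in the kernel of [Gamma -> Q], so [Q] is
   covered by the images of finitely many coset representatives and is finite.  In the
   second case each of the finitely many cosets of the image contains at most one
   element of [N], so [N] is finite. *)
From Stdlib Require Import List Classical.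
Import ListNotations.

Lemma gcancel {G : group} (x y z : G) : gop x y = gop x z -> y = z.
Proof.
  intro E.
  rewrite <- (gop_1l _ y), <- (gop_1l _ z), <- (gop_Vl _ x), <- !gop_assoc, E.
  reflexivity.
Qed.

Lemma gmulr1 {G : group} (x : G) : gop x gone = x.
Proof. apply (gcancel (ginv x)). now rewrite gop_assoc, gop_Vl, gop_1l. Qed.

Lemma gmulrV {G : group} (x : G) : gop x (ginv x) = gone.
Proof. apply (gcancel (ginv x)). now rewrite gop_assoc, gop_Vl, gop_1l, gmulr1. Qed.

Lemma gmul_solve {G : group} {x u y : G} : gop x u = y -> u = gop (ginv x) y.
Proof. intros <-. now rewrite gop_assoc, gop_Vl, gop_1l. Qed.

Lemma hom1 {G H : group} (f : G -> H) : @is_hom G H f -> f gone = gone.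
Proof. intro Hf. apply (gcancel (f gone)). now rewrite <- Hf, gop_1l, gmulr1. Qed.

Lemma homV {G H : group} (f : G -> H) (x : G) : @is_hom G H f -> f (ginv x) = ginv (f x).
Proof. intro Hf. apply (gcancel (f x)). rewrite <- Hf, !gmulrV. now apply hom1. Qed.

Definition div_closed {G : group} (H : G -> Prop) : Prop :=
  forall x y, H x -> H y -> H (gop (ginv x) y).

Lemma image_hom_op {G H : group} {f : G -> H} {u v : H} :
  @is_hom G H f -> image f u -> image f v -> image f (gop u v).
Proof. intros Hf [x <-] [y <-]. exists (gop x y). apply Hf. Qed.

Lemma image_hom_div_closed {G H : group} {f : G -> H} :
  @is_hom G H f -> div_closed (image f).
Proof.
  intros Hf u v [x <-] [y <-]. exists (gop (ginv x) y).
  now rewrite Hf, homV.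
Qed.

Lemma finite_set_sub {T : Type} {S S' : T -> Prop} :
  finite_set S -> (forall x, S' x -> S x) -> finite_set S'.
Proof. intros [l Hl] H. exists l. auto. Qed.

Lemma not_finite_set_exists_neq {T : Type} {S : T -> Prop} (c : T) :
  ~ finite_set S -> exists x, S x /\ x <> c.
Proof.
  intro Hinf. apply NNPP; intro Hnone. apply Hinf. exists [c].
  intros x Hx. left. apply NNPP; intro Hne. apply Hnone. now exists x.
Qed.

Lemma finite_set_preimage_inj {A B : Type} (f : A -> B) {S : B -> Prop} :
  (forall x y, f x = f y -> x = y) -> finite_set S -> finite_set (fun x => S (f x)).
Proof.
  intros Hinj [l Hl].
  assert (Hcover : exists l' : list A, forall x, In (f x) l -> In x l').
  { clear Hl. induction l as [|y l [l' IH]].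
    - exists []. intros x [].
    - destruct (classic (exists x, f x = y)) as [[x0 Hx0]|Hno].
      + exists (x0 :: l'). intros x [Hx|Hx]; [left|right; auto].
        apply Hinj. congruence.
      + exists l'. intros x [Hx|Hx]; auto. exfalso; eauto. }
  destruct Hcover as [l' Hl']. exists l'. auto.
Qed.

Lemma finite_domain_of_inj {A B : Type} {f : A -> B} :
  (forall x y, f x = f y -> x = y) -> finite_set (image f) -> finite_set (fun _ : A => True).
Proof.
  intros Hinj Hfin. apply (finite_set_sub (finite_set_preimage_inj f Hinj Hfin)).
  intros x _. now exists x.
Qed.

Lemma finite_set_union_subsingletons {I T : Type} (l : list I) {S : I -> T -> Prop} :
  (forall g x y, S g x -> S g y -> x = y) ->
  finite_set (fun x => exists g, In g l /\ S g x).
Proof.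
  intro Hsub. induction l as [|g l [l' IH]].
  - exists []. intros x [g [[] _]].
  - destruct (classic (exists x, S g x)) as [[x0 Hx0]|Hno].
    + exists (x0 :: l'). intros x [g' [[<-|Hin] Hx]].
      * left. eapply Hsub; eauto.
      * right. apply IH. eauto.
    + exists l'. intros x [g' [[<-|Hin] Hx]].
      * exfalso; eauto.
      * apply IH; eauto.
Qed.

Lemma finite_index_in_kernel {G Q : group} {p : G -> Q} {H : G -> Prop} :
  @is_hom G Q p -> (forall q : Q, exists g, p g = q) ->
  (forall h, H h -> p h = gone) -> @finite_index G H -> finite_set (fun _ : Q => True).
Proof.
  intros Hp Hsurj Hker [l Hl]. exists (map p l). intros q _.
  destruct (Hsurj q) as [g <-].
  destruct (Hl g) as [g0 [h [Hin [Hh ->]]]].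
  rewrite Hp, (Hker h Hh), gmulr1. now apply in_map.
Qed.

(* Two elements of [K] in the same coset [g H] differ by an element of [H :&: K]. *)
Lemma finite_index_trivial_meet {G : group} {H K : G -> Prop} :
  div_closed H -> div_closed K -> @finite_index G H ->
  (forall z, H z -> K z -> z = gone) -> finite_set K.
Proof.
  intros HH HK [l Hl] Hmeet.
  set (S := fun (g z : G) => K z /\ exists h, H h /\ z = gop g h).
  assert (Hsub : forall g z z', S g z -> S g z' -> z = z').
  { intros g z z' [Kz [h [Hh Ez]]] [Kz' [h' [Hh' Ez']]].
    assert (Hu : gop z (gop (ginv h) h') = z').
    { rewrite Ez, Ez', <- gop_assoc, (gop_assoc _ h), gmulrV, gop_1l. reflexivity. }
    assert (Hu1 : gop (ginv h) h' = gone).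
    { apply Hmeet; [now apply HH|].
      rewrite (gmul_solve Hu). now apply HK. }
    now rewrite <- Hu, Hu1, gmulr1. }
  apply (finite_set_sub (finite_set_union_subsingletons l Hsub)).
  intros z Kz. destruct (Hl z) as [g [h [Hin [Hh Ez]]]].
  exists g. repeat split; eauto.
Qed.

Section ProductHom.

Context {G1 G2 G : group} {phi : prod_group G1 G2 -> G}.
Hypothesis phi_hom : @is_hom (prod_group G1 G2) G phi.

Lemma prod_hom_split (x : G1) (y : G2) :
  phi (x, y) = gop (phi (x, gone)) (phi (gone, y)).
Proof. rewrite <- phi_hom. simpl. now rewrite gmulr1, gop_1l. Qed.

Lemma prod_hom_commute (x : G1) (y : G2) :
  gop (phi (x, gone)) (phi (gone, y)) = gop (phi (gone, y)) (phi (x, gone)).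
Proof. rewrite <- !phi_hom. simpl. now rewrite !gmulr1, !gop_1l. Qed.

End ProductHom.

Section AcentralCommuting.

Context {G : group} {N A B : G -> Prop}.
Hypothesis N_acentral : @acentral G N.
Hypothesis AB_commute : forall x y, A x -> B y -> gop x y = gop y x.

Lemma commuting_acentral_dichotomy :
  (exists x, A x /\ x <> gone) -> (exists y, B y /\ y <> gone) ->
  ((forall x, A x -> N x) /\ (forall y, B y -> N y)) \/
  ((forall x, A x -> N x -> x = gone) /\ (forall y, B y -> N y -> y = gone)).
Proof.
  intros [x0 [Ax0 Hx0]] [y0 [By0 Hy0]].
  assert (Hfrom_A : forall x, A x -> N x -> x <> gone -> forall y, B y -> N y).
  { intros x Ax Nx Hx y By. apply (N_acentral _ Nx Hx). symmetry. now apply AB_commute. }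
  assert (Hfrom_B : forall y, B y -> N y -> y <> gone -> forall x, A x -> N x).
  { intros y By Ny Hy x Ax. exact (N_acentral _ Ny Hy _ (AB_commute _ _ Ax By)). }
  destruct (classic (exists x, A x /\ N x /\ x <> gone)) as [[x [Ax [Nx Hx]]]|HnA].
  { left. split; [|exact (Hfrom_A x Ax Nx Hx)].
    exact (Hfrom_B y0 By0 (Hfrom_A x Ax Nx Hx y0 By0) Hy0). }
  destruct (classic (exists y, B y /\ N y /\ y <> gone)) as [[y [By [Ny Hy]]]|HnB].
  { left. split; [exact (Hfrom_B y By Ny Hy)|].
    exact (Hfrom_A x0 Ax0 (Hfrom_B y By Ny Hy x0 Ax0) Hx0). }
  right. split.
  - intros x Ax Nx. apply NNPP; intro Hx. eauto.
  - intros y By Ny. apply NNPP; intro Hy. eauto.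
Qed.

(* A nontrivial [x y] in [N] would have [x] in its centraliser, hence in [N]. *)
Lemma commuting_product_meet_trivial :
  (forall x, A x -> N x -> x = gone) -> (forall y, B y -> N y -> y = gone) ->
  forall x y, A x -> B y -> N (gop x y) -> gop x y = gone.
Proof.
  intros HA HB x y Ax By Nxy.
  destruct (classic (gop x y = gone)) as [|Hxy]; [assumption|].
  assert (Nx : N x).
  { apply (N_acentral _ Nxy Hxy).
    now rewrite <- gop_assoc, <- (AB_commute _ _ Ax By), gop_assoc. }
  rewrite (HA x Ax Nx), gop_1l in *.
  exact (HB y By Nxy).
Qed.

End AcentralCommuting.

Theorem corollary3p3 (N Gamma Q : group) (i : N -> Gamma) (p : Gamma -> Q) :
  @is_hom N Gamma i -> @is_hom Gamma Q p ->
  (forall x y, i x = i y -> x = y) ->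
  (forall q : Q, exists g, p g = q) ->
  (forall g : Gamma, p g = gone <-> exists n, i n = g) ->
  finitely_generated N -> finitely_generated Gamma -> finitely_generated Q ->
  infinite_group N -> infinite_group Q ->
  @acentral Gamma (image i) ->
  not_presentable_by_product Gamma.
Proof.
  intros Hi Hp Hinj Hsurj Hker _ _ _ infN infQ Hac. split.
  { intro Hfin. apply infN, (finite_domain_of_inj Hinj).
    now apply (finite_set_sub Hfin). }
  intros G1 G2 phi Hphi Hidx.
  set (a := fun x : G1 => phi (x, gone)).
  set (b := fun y : G2 => phi (gone, y)).
  assert (Hcomm : forall u v, image a u -> image b v -> gop u v = gop v u).
  { intros u v [x <-] [y <-]. exact (prod_hom_commute Hphi x y). }
  apply NNPP; intros [HA HB]%not_or_and.
  destruct (commuting_acentral_dichotomy Hac Hcomm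
              (not_finite_set_exists_neq gone HA) (not_finite_set_exists_neq gone HB))
    as [[HAN HBN]|[HAN HBN]].
  - apply infQ, (finite_index_in_kernel Hp Hsurj (H := image phi)); [|exact Hidx].
    intros g [[x y] <-]. apply Hker. rewrite (prod_hom_split Hphi).
    apply (image_hom_op Hi); [apply HAN|apply HBN]; eexists; reflexivity.
  - apply infN, (finite_domain_of_inj Hinj).
    apply (finite_index_trivial_meet (image_hom_div_closed Hphi)
             (image_hom_div_closed Hi) Hidx).
    intros z [[x y] <-]. rewrite (prod_hom_split Hphi).
    apply (commuting_product_meet_trivial Hac Hcomm HAN HBN); eexists; reflexivity.
Qed.
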